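(* If $\Gamma_G$ is population monotonic, then $G$ has no subgraph isomorphic to the complete graph $K_4$ (equivalently, no induced subgraph isomorphic to $K_4$).
   Context: $G=(V,E;w)$ is a finite simple graph with edge weights $w:E\to\mathbb{R}$, $w_e>0$ for all $e\in E$. The matching game on $G$ is the cooperative game $\Gamma_G=(N,\gamma)$ with player set $N=V$ and, for $S\subseteq N$, $\gamma(S)$ equal to the maximum weight of a matching in the induced subgraph $G[S]$ (so $\gamma(\emptyset)=0$). A population monotonic allocation scheme (PMAS) is a family $(\boldsymbol{x}_S)_{\emptyset\neq S\subseteq N}$ with $\boldsymbol{x}_S=(x_{S,i})_{i\in S}\in\mathbb{R}^S$ such that (efficiency) $\sum_{i\in S}x_{S,i}=\gamma(S)$ for every nonempty $S\subseteq N$, and (monotonicity) $x_{S,i}\le x_{T,i}$ whenever $\emptyset\ne S\subseteq T\subseteq N$ and $i\in S$. $\Gamma_G$ is called population monotonic if it admits a PMAS. *)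

From HB Require Import structures.
From mathcomp Require Import all_boot all_order all_algebra.
From mathcomp Require Import reals.
Set Implicit Arguments. Unset Strict Implicit. Unset Printing Implicit Defensive.
Import Order.TTheory GRing.Theory Num.Theory.
Local Open Scope ring_scope.

Definition simple_graph (V : finType) (e : rel V) : Prop :=
  (forall u v, e u v = e v u) /\ (forall u, ~~ e u u).

(* Edge weights w : V -> V -> R; only values on edges matter.  They are
   required symmetric (a weight of the unordered edge) and positive on edges. *)
Definition edge_weights (R : realType) (V : finType) (e : rel V) (w : V -> V -> R) : Prop :=
  (forall u v, w u v = w v u) /\ (forall u v, e u v -> 0 < w u v).

(* A matching in G[S]: a set of oriented edges (u,v) with u,v in S, e u v,
   and any two distinct members vertex-disjoint (in particular an edge cannot
   appear with both orientations). *)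
Definition is_matching (V : finType) (e : rel V) (S : {set V}) (M : {set V * V}) : bool :=
  [forall p in M, [&& p.1 \in S, p.2 \in S & e p.1 p.2]] &&
  [forall p in M, forall q in M, (p != q) ==>
     [&& p.1 != q.1, p.1 != q.2, p.2 != q.1 & p.2 != q.2]].

Definition matching_weight (R : realType) (V : finType) (w : V -> V -> R)
  (M : {set V * V}) : R := \sum_(p in M) w p.1 p.2.

Definition gamma (R : realType) (V : finType) (e : rel V) (w : V -> V -> R)
  (S : {set V}) : R :=
  \big[Num.max/0]_(M : {set V * V} | is_matching e S M) matching_weight w M.

Definition is_PMAS (R : realType) (V : finType) (e : rel V) (w : V -> V -> R)
  (x : {set V} -> V -> R) : Prop :=
  (forall S : {set V}, S != set0 -> \sum_(i in S) x S i = gamma e w S) /\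
  (forall (S T : {set V}) (i : V), S != set0 -> S \subset T -> i \in S ->
     x S i <= x T i).

Definition population_monotonic (R : realType) (V : finType) (e : rel V)
  (w : V -> V -> R) : Prop := exists x, is_PMAS e w x.

Definition has_K4 (V : finType) (e : rel V) : Prop :=
  exists a b c d : V,
    [/\ [&& a != b, a != c, a != d, b != c, b != d & c != d],
        [&& e a b, e a c & e a d] & [&& e b c, e b d & e c d]].

From mathcomp Require Import all_boot all_order all_algebra.
From mathcomp Require Import reals.
From mathcomp Require Import lra.
Set Implicit Arguments. Unset Strict Implicit. Unset Printing Implicit Defensive.
Import Order.TTheory GRing.Theory Num.Theory.
Local Open Scope ring_scope.

(* Fix a PMAS x and write  share u v := x_{{u,v}}(u)  for the
   payoff of u in the two-player coalition {u,v}; say that u "gets nothing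
   from v" when share u v <= 0.
   1. Analytic part.  For an edge uv the two shares add up to at least w_uv > 0,
      so u and v cannot both get nothing from each other.  For a triangle
      T = {u,v,t}, gamma(T) is at most its heaviest edge weight, say w_uv; then
      efficiency of x_T and monotonicity from the pairs to T force t to get
      nothing from u and from v, while u and v both get something from each
      other: t is an "apex" of T.
   2. Combinatorial part.  Any relation in which every triangle of a K4 has an
      apex, and no edge is void in both directions, is impossible: if c is the
      apex of abc, then d is the apex of abd (the edge ab is already shared),
      and then a gets nothing from c nor from d, so acd has no apex. *)

(* The combinatorics of apices, for an arbitrary relation Z ("gets nothing from"). *)
Section Apices.
Variables (T : Type) (Z : T -> T -> Prop).

Definition apex (t u v : T) : Prop := [/\ Z t u, Z t v, ~ Z u v & ~ Z v u].

Definition has_apex (u v t : T) : Prop := [\/ apex u v t, apex v t u | apex t u v].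

(* Two triangles sharing the edge ab: if the first one has its apex off ab,
   so has the second, since ab is shared in both directions. *)
Lemma apex_opposite c d a b : apex c a b -> has_apex d a b -> apex d a b.
Proof. by move=> [_ _ nab nba] [|[]|[]]. Qed.

Lemma no_apex_below a c d :
  (Z c a -> ~ Z a c) -> Z c a -> Z d a -> ~ has_apex a c d.
Proof. by move=> asym Zca Zda [[Zac _ _ _]|[_ _ nda _]|[_ _ _ nca]]; [exact: asym|..]. Qed.

Lemma K4_apex_clash a b c d :
  (Z c a -> ~ Z a c) -> apex c a b -> has_apex d a b -> has_apex a c d -> False.
Proof.
move=> asym apex_c abd acd.
have [Zca _ _ _] := apex_c.
have [Zda _ _ _] := apex_opposite apex_c abd.
exact: no_apex_below asym Zca Zda acd.
Qed.

End Apices.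

Lemma set3_rot (V : finType) (u v t : V) : [set u; v; t] = [set v; t; u].
Proof. by apply/setP => z; rewrite !inE -orbA orbC. Qed.

Lemma four_in_three (V : finType) (u v t y1 y2 y3 y4 : V) :
  uniq [:: y1; y2; y3; y4] -> all (mem [set u; v; t]) [:: y1; y2; y3; y4] -> False.
Proof.
move=> uniq_y /allP sub_y.
have sub_uvt : {subset [:: y1; y2; y3; y4] <= [:: u; v; t]}.
  by move=> z /sub_y; rewrite !inE -!orbA.
by have := uniq_leq_size uniq_y sub_uvt.
Qed.

Section MatchingGame.
Variables (R : realType) (V : finType) (e : rel V) (w : V -> V -> R).
Hypotheses (simple_e : simple_graph e) (weights_w : edge_weights e w).

Lemma edge_neq u v : e u v -> u != v.
Proof. by have [_ irr] := simple_e; apply: contraTneq => ->; exact: irr. Qed.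

Lemma sum_set2 (F : V -> R) u v : u != v -> \sum_(i in [set u; v]) F i = F u + F v.
Proof. by move=> uv; rewrite big_setU1 ?inE // big_set1. Qed.

Lemma sum_set3 (F : V -> R) u v t : u != v -> u != t -> v != t ->
  \sum_(i in [set u; v; t]) F i = F u + F v + F t.
Proof.
move=> uv ut vt; rewrite setUC big_setU1 /=; first by rewrite sum_set2 // addrC.
by rewrite !inE negb_or !(eq_sym t) ut vt.
Qed.

(* A single edge is a matching of its two endpoints. *)
Lemma gamma_pair u v : e u v -> w u v <= gamma e w [set u; v].
Proof.
move=> euv.
have match_uv : is_matching e [set u; v] [set (u, v)].
  apply/andP; split; apply/forallP => p; apply/implyP; rewrite inE => /eqP -> /=.
    by rewrite !inE !eqxx orbT euv.
  by apply/forallP => q; apply/implyP; rewrite inE => /eqP ->; rewrite eqxx.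
by apply: le_trans (le_bigmax_cond _ _ match_uv); rewrite /matching_weight big_set1.
Qed.

Lemma triangle_matching_single u v t M :
  is_matching e [set u; v; t] M -> forall p q, p \in M -> q \in M -> p = q.
Proof.
move=> /andP [/forallP inS /forallP disj] p q pM qM; apply/eqP/negPn/negP => pq.
have := implyP (forallP (implyP (disj p) pM) q) qM.
rewrite pq => /and4P [n11 n12 n21 n22].
have /and3P [p1 p2 /edge_neq p12] := implyP (inS p) pM.
have /and3P [q1 q2 /edge_neq q12] := implyP (inS q) qM.
apply: (@four_in_three _ u v t p.1 p.2 q.1 q.2); last by rewrite /= p1 p2 q1 q2.
by rewrite /= !inE !negb_or n11 n12 n21 n22 p12 q12.
Qed.

Lemma triangle_pair_weight u v t p1 p2 :
  p1 \in [set u; v; t] -> p2 \in [set u; v; t] -> p1 != p2 ->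
  w p1 p2 <= Num.max (w u v) (Num.max (w u t) (w v t)).
Proof.
have [wsym _] := weights_w.
rewrite !inE -!orbA => /or3P [] /eqP -> /or3P [] /eqP ->; rewrite ?eqxx // => _;
  by rewrite ?(wsym v u) ?(wsym t u) ?(wsym t v) !le_max lexx ?orbT.
Qed.

Lemma gamma_triangle u v t : e u v ->
  gamma e w [set u; v; t] <= Num.max (w u v) (Num.max (w u t) (w v t)).
Proof.
move=> euv; have [_ wpos] := weights_w.
have max_ge0 : 0 <= Num.max (w u v) (Num.max (w u t) (w v t)).
  by rewrite le_max (ltW (wpos _ _ euv)).
apply: bigmax_le => // M matchM.
case: (set_0Vmem M) => [->|[p pM]]; first by rewrite /matching_weight big_set0.
have -> : M = [set p].
  apply/setP => q; rewrite inE; apply/idP/eqP => [qM|->//].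
  exact: triangle_matching_single matchM q p qM pM.
have /andP [/forallP inS _] := matchM.
have /and3P [p1 p2 /edge_neq p12] := implyP (inS p) pM.
by rewrite /matching_weight big_set1; apply: triangle_pair_weight.
Qed.

Variable x : {set V} -> V -> R.
Hypothesis pmas_x : is_PMAS e w x.

Definition share (u v : V) : R := x [set u; v] u.

Definition void_share (u v : V) : Prop := share u v <= 0.

(* Efficiency on a pair: the two shares of an edge cover its weight. *)
Lemma share_edge u v : e u v -> w u v <= share u v + share v u.
Proof.
move=> euv; have [eff _] := pmas_x.
have ne : [set u; v] != set0 by apply/set0Pn; exists u; rewrite !inE eqxx.
by rewrite /share (setUC [set v]) -sum_set2 ?edge_neq // eff //; apply: gamma_pair.
Qed.

Lemma share_mono u v (S : {set V}) : u \in S -> v \in S -> share u v <= x S u.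
Proof.
move=> uS vS; have [_ mono] := pmas_x.
apply: mono; rewrite ?inE ?eqxx //; first by apply/set0Pn; exists u; rewrite !inE eqxx.
by apply/subsetP => z; rewrite !inE => /orP [] /eqP ->.
Qed.

Lemma void_share_asym u v : e u v -> void_share u v -> ~ void_share v u.
Proof.
have [_ wpos] := weights_w.
move=> euv Zuv Zvu; have := share_edge euv; have := wpos _ _ euv.
rewrite /void_share in Zuv Zvu; lra.
Qed.

(* If gamma of the triangle uvt is at most w_uv, then t is an apex: x_T(t) = 0
   by efficiency, which forces t's pair shares to vanish and those of u, v to
   be at least w_ut > 0 and w_vt > 0. *)
Lemma apex_of_heaviest u v t : e u v -> e u t -> e v t ->
  gamma e w [set u; v; t] <= w u v -> apex void_share t u v.
Proof.
have [esym _] := simple_e; have [_ wpos] := weights_w; have [eff _] := pmas_x.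
move=> euv eut evt gamma_le; set T := [set u; v; t].
have [uT vT tT] : [/\ u \in T, v \in T & t \in T] by rewrite !inE !eqxx ?orbT.
have etu : e t u by rewrite esym.
have etv : e t v by rewrite esym.
(* x_T(u) + x_T(v) + x_T(t) = gamma(T) <= w_uv <= share u v + share v u *)
have sumT : x T u + x T v + x T t <= share u v + share v u.
  rewrite -sum_set3 ?edge_neq // eff; last by apply/set0Pn; exists u.
  exact: le_trans gamma_le (share_edge euv).
have [muv mvu] := (share_mono uT vT, share_mono vT uT).
have [mtu mtv] := (share_mono tT uT, share_mono tT vT).
have [mut mvt] := (share_mono uT tT, share_mono vT tT).
have xTt_le0 : x T t <= 0 by lra.
have [wtu wtv] := (share_edge etu, share_edge etv).
have [ptu ptv] := (wpos _ _ etu, wpos _ _ etv).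
by split; rewrite /void_share; lra.
Qed.

(* Every triangle has an apex, namely the vertex opposite a heaviest edge. *)
Lemma triangle_has_apex u v t : e u v -> e u t -> e v t ->
  has_apex void_share u v t.
Proof.
have [esym _] := simple_e; have [wsym _] := weights_w.
move=> euv eut evt; have [evu etu etv] : [/\ e v u, e t u & e t v] by rewrite !(esym t) esym.
have := gamma_triangle t euv; rewrite !le_max => /orP [heavy|/orP [heavy|heavy]].
- by apply: Or33; apply: apex_of_heaviest.
- by apply: Or32; apply: apex_of_heaviest; rewrite // set3_rot wsym.
- by apply: Or31; apply: apex_of_heaviest; rewrite // -set3_rot.
Qed.

End MatchingGame.

Theorem mainTheorem9 (R : realType) (V : finType) (e : rel V) (w : V -> V -> R) :
  simple_graph e -> edge_weights e w ->
  population_monotonic e w -> ~ has_K4 e.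
Proof.
move=> G W [x P] [a [b [c [d [_ /and3P [eab eac ead] /and3P [ebc ebd ecd]]]]]].
have [esym _] := G.
have rev u v : e u v -> e v u by rewrite esym.
have asym := void_share_asym G W P.
have tri := triangle_has_apex G W P.
(* Whichever vertex is the apex of abc, relabel so that it plays c in K4_apex_clash. *)
move: (tri a b c eab eac ebc) => [apex_a|apex_b|apex_c].
- exact: (K4_apex_clash (asym _ _ eab) apex_a
    (tri _ _ _ (rev _ _ ebd) (rev _ _ ecd) ebc) (tri _ _ _ (rev _ _ eab) ebd ead)).
- exact: (K4_apex_clash (asym _ _ ebc) apex_b
    (tri _ _ _ (rev _ _ ecd) (rev _ _ ead) (rev _ _ eac)) (tri _ _ _ (rev _ _ ebc) ecd ebd)).
- exact: (K4_apex_clash (asym _ _ (rev _ _ eac)) apex_c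
    (tri _ _ _ (rev _ _ ead) (rev _ _ ebd) eab) (tri _ _ _ eac ead ecd)).
Qed.
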